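(* Let $\mathcal H$ and $\mathcal H'$ be hypergraphs such that for any $\sigma\in\mathcal H$ and any $\sigma'\in\mathcal H'$, either $\sigma\cap\sigma'=\emptyset$ or $\sigma\cap\sigma'\in\mathcal H\cap\mathcal H'$. Then there are long exact sequences of relative embedded homology $$\cdots\to H_n(\mathcal H\cap\mathcal H',\delta\mathcal H\cap\delta\mathcal H')\to H_n(\mathcal H,\delta\mathcal H)\oplus H_n(\mathcal H',\delta\mathcal H')\to H_n(\mathcal H\cup\mathcal H',\delta\mathcal H\cup\delta\mathcal H')\to H_{n-1}(\mathcal H\cap\mathcal H',\delta\mathcal H\cap\delta\mathcal H')\to\cdots$$ and $$\cdots\to H_n(\Delta\mathcal H\cap\Delta\mathcal H',\mathcal H\cap\mathcal H')\to H_n(\Delta\mathcal H,\mathcal H)\oplus H_n(\Delta\mathcal H',\mathcal H')\to H_n(\Delta\mathcal H\cup\Delta\mathcal H',\mathcal H\cup\mathcal H')\to H_{n-1}(\Delta\mathcal H\cap\Delta\mathcal H',\mathcal H\cap\mathcal H')\to\cdots.$$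
   Context: A hypergraph is a finite set of nonempty finite subsets of a vertex set (hyperedges); an $n$-hyperedge has $n+1$ vertices. Unions and intersections are of sets of hyperedges. The associated simplicial complex is $\Delta\mathcal H=\{\sigma\ne\emptyset:\sigma\subseteq\tau\text{ for some }\tau\in\mathcal H\}$; the lower-associated simplicial complex is $\delta\mathcal H=\{\sigma\in\mathcal H:\text{every nonempty }\tau\subseteq\sigma\text{ lies in }\mathcal H\}$. Fix an abelian coefficient group $G$; chains are simplicial chains with coefficients in $G$ with boundary $\partial$; $G(\mathcal H)_n$ is the group of $G$-linear combinations of $n$-hyperedges of $\mathcal H$; $\mathrm{Inf}_n(\mathcal H)=G(\mathcal H)_n\cap\partial_n^{-1}(G(\mathcal H)_{n-1})$. For $\mathcal A\subseteq\mathcal B$, relative embedded homology is $H_n(\mathcal B,\mathcal A)=H_n(\mathrm{Inf}_*(\mathcal B)/\mathrm{Inf}_*(\mathcal A))$. *)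

From HB Require Import structures.
From mathcomp Require Import all_boot all_order all_algebra.
Set Implicit Arguments. Unset Strict Implicit. Unset Printing Implicit Defensive.
Import GRing.Theory.
Local Open Scope ring_scope.

Section Hyper.
Variables (V : finType) (G : zmodType).

Definition hypergraph (H : {set {set V}}) : Prop := set0 \notin H.

Definition Delta (H : {set {set V}}) : {set {set V}} :=
  [set s : {set V} | (s != set0) && [exists t in H, s \subset t]].

Definition delta (H : {set {set V}}) : {set {set V}} :=
  [set s in H | [forall t : {set V}, ((t != set0) && (t \subset s)) ==> (t \in H)]].

(* Chains with coefficients in G: a simplex is a nonempty subset of V, an
   n-simplex has n+1 vertices; a chain is a finitely supported (here: any)
   G-valued function on subsets. Degree-n chains are those supported on
   (n+1)-element sets. *)
Definition chain := {ffun {set V} -> G}.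

Definition vlt (u v : V) : bool := (enum_rank u < enum_rank v)%N.

Definition sgnG (k : nat) (x : G) : G := if odd k then - x else x.

(* simplicial boundary, vertices ordered by enum_rank:
   d[v0..vn] = sum_i (-1)^i [v0..^vi..vn]; the boundary of a vertex is 0. *)
Definition bd (c : chain) : chain :=
  [ffun s : {set V} => if s == set0 then 0 else
     \sum_(v : V | v \notin s) sgnG #|[set u in s | vlt u v]| (c (v |: s))].

Definition homog (n : nat) (c : chain) : Prop :=
  forall s, c s != 0 -> #|s| = n.+1.

Definition supported_in (H : {set {set V}}) (c : chain) : Prop :=
  forall s, c s != 0 -> s \in H.

Definition GH (H : {set {set V}}) (n : nat) (c : chain) : Prop :=
  homog n c /\ supported_in H c.

(* Inf_n(H) = G(H)_n  cap  d_n^{-1}(G(H)_{n-1})   (G(H)_{-1} = 0, d_0 = 0) *)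
Definition Inf (H : {set {set V}}) (n : nat) (c : chain) : Prop :=
  GH H n c /\ (if n is k.+1 then GH H k (bd c) else True).

(* H_n(B, A) = H_n(Inf(B)/Inf(A)), written (third isomorphism theorem) as the
   subquotient  relZ / relB  of the chain group:
   cycles of the quotient complex lifted to Inf_n(B), modulo
   d(Inf_{n+1}(B)) + Inf_n(A). *)
Definition relZ (B A : {set {set V}}) (n : nat) (c : chain) : Prop :=
  Inf B n c /\ (if n is k.+1 then Inf A k (bd c) else True).

Definition relB (B A : {set {set V}}) (n : nat) (c : chain) : Prop :=
  exists y a, Inf B n.+1 y /\ Inf A n a /\ c = bd y + a.

End Hyper.

(* Group homomorphisms between subquotients Z/B (of ambient M) and Z'/B'
   (of ambient M'), represented by a lifting function f : M -> M'. *)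
Definition hom_sq (M M' : zmodType) (Z B : M -> Prop) (Z' B' : M' -> Prop)
  (f : M -> M') : Prop :=
  [/\ forall x, Z x -> Z' (f x),
      forall x, B x -> B' (f x) &
      forall x y, Z x -> Z y -> B' (f (x + y) - f x - f y)].

Definition exact_at (M1 M2 M3 : zmodType) (Z1 B1 : M1 -> Prop)
  (Z2 B2 : M2 -> Prop) (Z3 B3 : M3 -> Prop) (f : M1 -> M2) (g : M2 -> M3) :
  Prop :=
  forall z, Z2 z -> (B3 (g z) <-> exists2 w, Z1 w & B2 (z - f w)).

Section MV.
Variables (V : finType) (G : zmodType).

Definition sumP (P1 P2 : chain V G -> Prop) (p : (chain V G * chain V G)%type)
  : Prop := P1 p.1 /\ P2 p.2.

Definition mv_i (c : chain V G) : (chain V G * chain V G)%type := (c, - c).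
Definition mv_j (p : (chain V G * chain V G)%type) : chain V G := p.1 + p.2.

(* Mayer-Vietoris long exact sequence for pairs (B1, A1), (B2, A2):
   ... -> H_n(B1 cap B2, A1 cap A2) -i-> H_n(B1,A1) (+) H_n(B2,A2)
       -j-> H_n(B1 cup B2, A1 cup A2) -d-> H_{n-1}(B1 cap B2, A1 cap A2) -> ...
   ending with  -> H_0(B1 cup B2, A1 cup A2) -> 0.
   i and j are the natural maps induced by inclusions (x |-> (x,-x),
   (a,b) |-> a+b); d_n : H_{n+1}(cup) -> H_n(cap) is some homomorphism. *)
Definition MV_les (B1 A1 B2 A2 : {set {set V}}) : Prop :=
  let Zi n := @relZ V G (B1 :&: B2) (A1 :&: A2) n in
  let Bi n := @relB V G (B1 :&: B2) (A1 :&: A2) n in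
  let Zs n := sumP (@relZ V G B1 A1 n) (@relZ V G B2 A2 n) in
  let Bs n := sumP (@relB V G B1 A1 n) (@relB V G B2 A2 n) in
  let Zu n := @relZ V G (B1 :|: B2) (A1 :|: A2) n in
  let Bu n := @relB V G (B1 :|: B2) (A1 :|: A2) n in
  exists d : nat -> chain V G -> chain V G,
    (forall n,
      [/\ hom_sq (Zi n) (Bi n) (Zs n) (Bs n) mv_i,
          hom_sq (Zs n) (Bs n) (Zu n) (Bu n) mv_j &
          hom_sq (Zu n.+1) (Bu n.+1) (Zi n) (Bi n) (d n)] /\
      [/\ exact_at (Zu n.+1) (Bu n.+1) (Zi n) (Bi n) (Zs n) (Bs n) (d n) mv_i,
          exact_at (Zi n) (Bi n) (Zs n) (Bs n) (Zu n) (Bu n) mv_i mv_j &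
          exact_at (Zs n.+1) (Bs n.+1) (Zu n.+1) (Bu n.+1) (Zi n) (Bi n)
                   mv_j (d n)])
    /\ (forall z, Zu 0 z -> exists2 w, Zs 0 w & Bu 0 (z - mv_j w)).

End MV.

(* H_n(B, A) is the homology of Inf(B)/Inf(A).  For two nested pairs
   (B1, A1), (B2, A2) we run the snake-lemma construction on the sequences
     Inf(B1 cap B2) -> Inf(B1) (+) Inf(B2) -> Inf(B1 cup B2),
   and likewise for the A's, with maps x |-> (x, -x) and (p, q) |-> p + q.
   The only non-formal input is that every chain of Inf(X1 cup X2) is a sum
   of chains of Inf(X1) and Inf(X2).  This holds, by restricting the chain to
   X1, under a condition on codimension-one faces, [mv_compatible X1 X2]
   (Inf_splitU).  The theorem
   follows since its hypothesis makes H and H' compatible, while the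
   down-closed families delta H and Delta H are always compatible. *)

From mathcomp Require Import all_boot all_order all_algebra.
From Stdlib Require Import ClassicalEpsilon.
Set Implicit Arguments. Unset Strict Implicit. Unset Printing Implicit Defensive.
Import GRing.Theory.
Local Open Scope ring_scope.

Section Boundary.
Variables (V : finType) (G : zmodType).
Implicit Types (c x y : chain V G) (s t : {set V}).

Lemma sgnGB k (a b : G) : sgnG k (a - b) = sgnG k a - sgnG k b.
Proof. by rewrite /sgnG; case: ifP => // _; rewrite opprD. Qed.

Lemma sgnGK k m (a : G) : sgnG k (sgnG m a) = sgnG (k + m) a.
Proof. by rewrite /sgnG oddD; case: (odd k); case: (odd m) => //=; rewrite opprK. Qed.

Lemma sgnG0 k : sgnG k (0 : G) = 0.
Proof. by rewrite /sgnG; case: ifP; rewrite ?oppr0. Qed.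

Lemma sgnG_sum k (P : pred V) (F : V -> G) :
  sgnG k (\sum_(i | P i) F i) = \sum_(i | P i) sgnG k (F i).
Proof. by rewrite /sgnG; case: ifP => // _; rewrite sumrN. Qed.

Lemma bdB x y : bd (x - y) = bd x - bd y.
Proof.
apply/ffunP => s; rewrite !ffunE; case: ifP => _; first by rewrite subr0.
by rewrite -sumrB; apply: eq_bigr => v _; rewrite !ffunE sgnGB.
Qed.

Lemma bd0 : bd (0 : chain V G) = 0.
Proof. by have := bdB 0 0; rewrite !subrr. Qed.

Lemma bdN x : bd (- x) = - bd x.
Proof. by rewrite -sub0r bdB bd0 sub0r. Qed.

Lemma bdD x y : bd (x + y) = bd x + bd y.
Proof. by have := bdB x (- y); rewrite opprK bdN opprK. Qed.

Lemma vlt_asym (v w : V) : vlt v w -> ~~ vlt w v.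
Proof. by rewrite /vlt -leqNgt => /ltnW. Qed.

Lemma vlt_total (v w : V) : v != w -> vlt v w || vlt w v.
Proof.
move=> nvw; rewrite /vlt; case: ltngtP => // e.
by move: nvw; rewrite (enum_rank_inj (ord_inj e)) eqxx.
Qed.

Lemma card_below_U1 s v w : v \notin s ->
  #|[set u in v |: s | vlt u w]| = (#|[set u in s | vlt u w]| + vlt v w)%N.
Proof.
move=> vs; case: (boolP (vlt v w)) => vw; last first.
  rewrite addn0; apply: eq_card => u; rewrite !inE.
  by case: eqP => // ->; rewrite (negbTE vw) !andbF.
have -> : [set u in v |: s | vlt u w] = v |: [set u in s | vlt u w].
  by apply/setP => u; rewrite !inE; case: eqP => // ->; rewrite vw.
by rewrite cardsU1 !inE (negbTE vs) addn1.
Qed.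

Lemma sum_skew0 (F : V -> V -> G) :
  (forall v, F v v = 0) -> (forall v w, vlt v w -> F v w + F w v = 0) ->
  \sum_v \sum_w F v w = 0.
Proof.
move=> diag skew.
pose Flt v w := if vlt v w then F v w else 0.
pose Fgt v w := if vlt w v then F v w else 0.
have splitF v w : F v w = Flt v w + Fgt v w.
  rewrite /Flt /Fgt; have [->|nvw] := eqVneq v w; first by rewrite diag !if_same addr0.
  have := vlt_total nvw; case: ifP => [vw _|_ /= wv]; last by rewrite wv add0r.
  by rewrite (negbTE (vlt_asym vw)) addr0.
under eq_bigr do under eq_bigr do rewrite splitF.
under eq_bigr do rewrite big_split.
rewrite big_split /= [X in _ + X]exchange_big -big_split /=.
apply: big1 => v _; rewrite -big_split; apply: big1 => w _.
by rewrite /Flt /Fgt; case: ifP => [/skew //|_]; rewrite /= addr0.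
Qed.

(* d^2 = 0: bd (bd x) on s is a double sum over pairs of distinct vertices
   v, w added to s, and the pairs (v, w), (w, v) contribute the coefficient
   of x on s + v + w with signs of opposite parity. *)
Lemma bdbd x : bd (bd x) = 0.
Proof.
apply/ffunP => s; rewrite !ffunE; case: ifP => // s0.
pose a t w := #|[set u in t | vlt u w]|.
pose F v w := if [&& v \notin s, w \notin s & w != v] then
   sgnG (a s v) (sgnG (a (v |: s) w) (x (w |: (v |: s)))) else 0.
transitivity (\sum_v \sum_w F v w).
  rewrite big_mkcond; apply: eq_bigr => v _; rewrite ffunE.
  have -> : (v |: s == set0) = false.
    by apply/negbTE/set0Pn; exists v; rewrite !inE eqxx.
  case: ifP => vs; last by rewrite /F vs /= big1.
  rewrite sgnG_sum big_mkcond /=; apply: eq_bigr => w _.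
  by rewrite /F vs !inE /=; case: (w == v); case: (w \in s); rewrite ?sgnG0.
apply: sum_skew0 => [v|v w vw]; first by rewrite /F eqxx !andbF.
have nwv : w != v by apply: contraTneq vw => ->; rewrite /vlt ltnn.
rewrite /F nwv (eq_sym v w) nwv !andbT.
case: (boolP (v \in s)) => vs /=; first by rewrite andbF addr0.
case: (boolP (w \in s)) => ws /=; first by rewrite addr0.
rewrite !sgnGK /a !card_below_U1 // vw (negbTE (vlt_asym vw)) addn0 setUCA.
by rewrite addn1 addnS addnC /sgnG /=; case: (odd _); rewrite ?addNr ?addrN.
Qed.

Lemma nz_bd c t : bd c t != 0 -> t != set0 /\ exists2 v, v \notin t & c (v |: t) != 0.
Proof.
rewrite ffunE; case: ifP => [_|t0 hs]; first by rewrite eqxx.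
split => //; apply/exists_inP; apply: contraR hs => /exists_inPn h.
by rewrite big1 // => v vt; move: (h v vt); rewrite negbK => /eqP ->; rewrite sgnG0.
Qed.

Lemma homog_bd n c : homog n.+1 c -> homog n (bd c).
Proof. by move=> h t /nz_bd [_ [v vt /h]]; rewrite cardsU1 vt add1n => -[]. Qed.

End Boundary.

Section ChainGroups.
Variables (V : finType) (G : zmodType).
Implicit Types (c x y : chain V G) (X Y : {set {set V}}) (n k : nat).

Lemma GH0 X n : GH X n (0 : chain V G).
Proof. by split => s; rewrite ffunE eqxx. Qed.

Lemma GHB X n x y : GH X n x -> GH X n y -> GH X n (x - y).
Proof.
move=> [hx sx] [hy sy].
have nz_sub s : (x - y) s != 0 -> x s != 0 \/ y s != 0.
  rewrite !ffunE; case: (eqVneq (x s) 0) => [->|]; last by left.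
  by rewrite add0r oppr_eq0; right.
by split=> s /nz_sub [] nz; by [apply: hx | apply: hy | apply: sx | apply: sy].
Qed.

Lemma Inf0 X n : Inf X n (0 : chain V G).
Proof. by split; [apply: GH0 | case: n => // n; rewrite bd0; apply: GH0]. Qed.

Lemma InfB X n x y : Inf X n x -> Inf X n y -> Inf X n (x - y).
Proof.
case: n => [|n] [h1 b1] [h2 b2]; split => //; try exact: GHB.
by rewrite bdB; apply: GHB.
Qed.

Lemma InfN X n x : Inf X n x -> Inf X n (- x).
Proof. by move=> h; rewrite -sub0r; apply: InfB => //; apply: Inf0. Qed.

Lemma InfD X n x y : Inf X n x -> Inf X n y -> Inf X n (x + y).
Proof. by move=> h1 h2; rewrite -(opprK y); apply: InfB => //; apply: InfN. Qed.

Lemma Inf_bd X n y : Inf X n.+1 y -> Inf X n (bd y).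
Proof. by case=> _ h; split => //; case: n h => // n _; rewrite bdbd; apply: GH0. Qed.

Lemma Inf_intro X n c : homog n c -> supported_in X c ->
  (forall k, n = k.+1 -> supported_in X (bd c)) -> Inf X n c.
Proof.
move=> h s sb; split=> //; case: n h sb => // n h sb.
by split; [apply: homog_bd | apply: sb].
Qed.

Lemma Inf_mono X Y n x : X \subset Y -> Inf X n x -> Inf Y n x.
Proof.
have GH_mono k c : GH X k c -> X \subset Y -> GH Y k c.
  by move=> [h s] XY; split => // t /s /(subsetP XY).
by move=> XY [h1 h2]; split; [apply: GH_mono | case: n h1 h2 => // n _ /GH_mono; apply].
Qed.

Lemma Inf_addU X1 X2 n x1 x2 :
  Inf X1 n x1 -> Inf X2 n x2 -> Inf (X1 :|: X2) n (x1 + x2).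
Proof.
move=> h1 h2; apply: InfD; [apply: Inf_mono h1 | apply: Inf_mono h2].
  exact: subsetUl.
exact: subsetUr.
Qed.

Lemma InfI X1 X2 n x : Inf (X1 :&: X2) n x <-> Inf X1 n x /\ Inf X2 n x.
Proof.
have GHI k c : GH (X1 :&: X2) k c <-> GH X1 k c /\ GH X2 k c.
  split=> [[h s]|[[h s1] [_ s2]]]; last by split=> // t tx; rewrite inE s1 ?s2.
  by split; split=> // t /s; rewrite inE => /andP[].
split=> [[/GHI [g1 g2] h]|[[g1 h1] [g2 h2]]]; last first.
  by split; [apply/GHI | case: n {g1 g2} h1 h2 => // n h1 h2; apply/GHI].
by split; split=> //; case: n {g1 g2} h => // n /GHI[].
Qed.

Lemma relZP X Y n c :
  relZ X Y n c <-> Inf X n c /\ (forall k, n = k.+1 -> Inf Y k (bd c)).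
Proof.
case: n => [|n]; split=> -[h1 h2]; split=> //; [by move=> k [<-] | exact: h2].
Qed.

Lemma relZB X Y n x y : relZ X Y n x -> relZ X Y n y -> relZ X Y n (x - y).
Proof.
move=> /relZP[hx bx] /relZP[hy b]; apply/relZP; split; first exact: InfB.
by move=> k ek; rewrite bdB; apply: InfB; [apply: bx | apply: b].
Qed.

Lemma relZ0 X Y n : relZ X Y n (0 : chain V G).
Proof. by apply/relZP; split=> [|k _]; rewrite ?bd0; apply: Inf0. Qed.

Lemma relZN X Y n x : relZ X Y n x -> relZ X Y n (- x).
Proof. by move=> h; rewrite -sub0r; apply: relZB => //; apply: relZ0. Qed.

Lemma relZD X Y n x y : relZ X Y n x -> relZ X Y n y -> relZ X Y n (x + y).
Proof. by move=> h1 h2; rewrite -(opprK y); apply: relZB => //; apply: relZN. Qed.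

Lemma relZI X1 Y1 X2 Y2 n x :
  relZ (X1 :&: X2) (Y1 :&: Y2) n x <-> relZ X1 Y1 n x /\ relZ X2 Y2 n x.
Proof.
split=> [/relZP[/InfI[h1 h2] b]|[/relZP[h1 b1] /relZP[h2 b2]]].
  by split; apply/relZP; split=> // k /b /InfI[].
by apply/relZP; split=> [|k ek]; apply/InfI; split; by [| apply: b1 | apply: b2].
Qed.

Lemma relZ_addU X1 Y1 X2 Y2 n x1 x2 : relZ X1 Y1 n x1 -> relZ X2 Y2 n x2 ->
  relZ (X1 :|: X2) (Y1 :|: Y2) n (x1 + x2).
Proof.
move=> /relZP[h1 b1] /relZP[h2 b2]; apply/relZP; split; first exact: Inf_addU.
by move=> k ek; rewrite bdD; apply: Inf_addU; [apply: b1 | apply: b2].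
Qed.

Lemma relB0 X Y n : relB X Y n (0 : chain V G).
Proof. by exists 0, 0; rewrite bd0 addr0; split; [| split]; try apply: Inf0. Qed.

Lemma relBB X Y n x y : relB X Y n x -> relB X Y n y -> relB X Y n (x - y).
Proof.
move=> [u [a [hu [ha ->]]]] [u' [a' [hu' [ha' ->]]]].
exists (u - u'), (a - a'); split; first exact: InfB.
by split; [apply: InfB | rewrite bdB opprD addrACA].
Qed.

Lemma relBN X Y n x : relB X Y n x -> relB X Y n (- x).
Proof. by move=> h; rewrite -sub0r; apply: relBB => //; apply: relB0. Qed.

Lemma relBD X Y n x y : relB X Y n x -> relB X Y n y -> relB X Y n (x + y).
Proof. by move=> h1 h2; rewrite -(opprK y); apply: relBB => //; apply: relBN. Qed.

Lemma relBI X1 Y1 X2 Y2 n x :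
  relB (X1 :&: X2) (Y1 :&: Y2) n x -> relB X1 Y1 n x /\ relB X2 Y2 n x.
Proof.
by move=> [u [a [/InfI[u1 u2] [/InfI[a1 a2] ->]]]]; split; exists u, a.
Qed.

Lemma relB_addU X1 Y1 X2 Y2 n x1 x2 : relB X1 Y1 n x1 -> relB X2 Y2 n x2 ->
  relB (X1 :|: X2) (Y1 :|: Y2) n (x1 + x2).
Proof.
move=> [u1 [a1 [hu1 [ha1 ->]]]] [u2 [a2 [hu2 [ha2 ->]]]].
exists (u1 + u2), (a1 + a2); split; first exact: Inf_addU.
by split; [apply: Inf_addU | rewrite bdD addrACA].
Qed.

Lemma relB_relZ X Y n c : Y \subset X -> relB X Y n c -> relZ X Y n c.
Proof.
move=> YX [u [a [hu [ha ->]]]]; apply/relZP; split.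
  by apply: InfD; [apply: Inf_bd | apply: Inf_mono ha].
by move=> k ek; subst n; rewrite bdD bdbd add0r; apply: Inf_bd.
Qed.

End ChainGroups.

Section Compatibility.
Variable V : finType.
Implicit Types (s t : {set V}) (X Y : {set {set V}}).

Definition mv_compatible X Y : Prop :=
 [/\ (forall t v, t != set0 -> v \notin t -> v |: t \in X -> t \in Y -> t \in X),
     (forall t v, t != set0 -> v \notin t -> v |: t \in Y -> t \in X -> t \in Y) &
     (forall t v w, t != set0 -> v \notin t -> w \notin t -> v != w ->
        v |: t \in X -> w |: t \in Y -> t \in X /\ t \in Y)].

Lemma mv_compatible_sym X Y : mv_compatible X Y -> mv_compatible Y X.
Proof.
case=> cX cY cXY; split=> // t v w t0 vt wt vw vY wX.
by have [] := cXY t w v t0 wt vt; rewrite 1?eq_sym.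
Qed.

Definition down_closed X := forall s t, s \in X -> t \subset s -> t != set0 -> t \in X.

Lemma down_closed_compatible X Y :
  down_closed X -> down_closed Y -> mv_compatible X Y.
Proof.
have face Z t v : down_closed Z -> t != set0 -> v |: t \in Z -> t \in Z.
  by move=> dZ t0 vt; apply: dZ vt _ t0; apply: subsetUr.
move=> dX dY; split=> [t v t0 _ vX _|t v t0 _ vY _|t v w t0 _ _ _ vX wY].
- exact: face dX t0 vX.
- exact: face dY t0 vY.
- by split; [apply: face dX t0 vX | apply: face dY t0 wY].
Qed.

(* The hypothesis of the theorem makes H and H' compatible: the relevant
   faces are intersections of a hyperedge of H with one of H'. *)
Lemma hyp_compatible X Y :
  (forall s s', s \in X -> s' \in Y -> s :&: s' = set0 \/ s :&: s' \in X :&: Y) ->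
  mv_compatible X Y.
Proof.
have face_in Z Z' t s :
    t != set0 -> s = set0 \/ s \in Z :&: Z' -> s = t -> t \in Z /\ t \in Z'.
  by move=> t0 [-> /eqP|]; [rewrite eq_sym (negbTE t0) | rewrite inE => /andP[? ?] <-].
move=> hyp; split.
- move=> t v t0 _ vX tY; have := face_in _ _ _ _ t0 (hyp _ _ vX tY).
  by case; [apply/setIidPr; apply: subsetUr|].
- move=> t v t0 _ vY tX; have := face_in _ _ _ _ t0 (hyp _ _ tX vY).
  by case; [apply/setIidPl; apply: subsetUr|].
- move=> t v w t0 vt wt vw vX wY; apply: face_in t0 (hyp _ _ vX wY) _.
  apply/setP => u; rewrite !inE; case: (eqVneq u v) => [->|uv] /=.
    by rewrite (negbTE vt) (negbTE vw).
  by case: (eqVneq u w) => [->|uw] /=; rewrite ?(negbTE wt) ?andbb.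
Qed.

Lemma delta_down_closed X : down_closed (delta X).
Proof.
move=> s t; rewrite !inE => /andP[sX /forallP hs] ts t0; apply/andP; split.
  by move: (hs t); rewrite t0 ts.
apply/forallP => u; apply/implyP => /andP[u0 ut].
by move: (hs u); rewrite u0 (subset_trans ut ts).
Qed.

Lemma Delta_down_closed X : down_closed (Delta X).
Proof.
move=> s t; rewrite !inE => /andP[_ /exists_inP[u uX su]] ts t0.
by rewrite t0; apply/exists_inP; exists u => //; apply: subset_trans ts su.
Qed.

Lemma delta_sub X : delta X \subset X.
Proof. by apply/subsetP => s; rewrite inE => /andP[]. Qed.

Lemma Delta_sup X : hypergraph X -> X \subset Delta X.
Proof.
move=> hX; apply/subsetP => s sX; rewrite inE; apply/andP; split.
  by apply: contraNneq hX => <-.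
by apply/exists_inP; exists s.
Qed.

End Compatibility.

Section Splitting.
Variables (V : finType) (G : zmodType).
Implicit Types (c x : chain V G) (s : {set V}) (X : {set {set V}}).

Definition restrict X c : chain V G := [ffun s => if s \in X then c s else 0].

Lemma restrictE X c s : restrict X c s = if s \in X then c s else 0.
Proof. by rewrite ffunE. Qed.

Lemma restrict_splitC X c : c = restrict X c + restrict (~: X) c.
Proof.
by apply/ffunP => s; rewrite !ffunE inE; case: (s \in X); rewrite ?addr0 ?add0r.
Qed.

Lemma restrict_supp X c : supported_in X (restrict X c).
Proof. by move=> s; rewrite restrictE; case: ifP => //; rewrite eqxx. Qed.

Lemma restrict_homog n X c : homog n c -> homog n (restrict X c).
Proof. by move=> h s; rewrite restrictE; case: ifP => [_ /h|] //; rewrite eqxx. Qed.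

(* A coefficient of bd c1 on t not in X1 would have to be
   cancelled, or produced, by a neighbouring simplex, which compatibility
   forbids. *)
Lemma bd_part_supported X1 X2 (c1 c2 : chain V G) :
  mv_compatible X1 X2 -> supported_in X1 c1 -> supported_in X2 c2 ->
  (forall s, c1 s != 0 -> c2 s = 0) ->
  supported_in (X1 :|: X2) (bd (c1 + c2)) -> supported_in X1 (bd c1).
Proof.
move=> [face1 _ face12] s1 s2 disj sbd t nz; apply/negPn/negP => tX1.
have [t0 [v vt c1v]] := nz_bd nz.
have vX1 := s1 _ c1v.
have [bt|/sbd] := eqVneq (bd (c1 + c2) t) 0; last first.
  rewrite inE (negbTE tX1) /= => tX2.
  by move: (face1 t v t0 vt vX1 tX2); rewrite (negbTE tX1).
have : bd c2 t != 0.
  move: bt; rewrite bdD ffunE addrC => /eqP.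
  by rewrite addr_eq0 => /eqP ->; rewrite oppr_eq0.
case/nz_bd => _ [w wt c2w].
have vw : v != w by apply: contraNneq c2w => <-; rewrite disj.
by have [] := face12 t v w t0 vt wt vw vX1 (s2 _ c2w); rewrite (negbTE tX1).
Qed.

(* Under compatibility, Inf(X1 cup X2) = Inf(X1) + Inf(X2): split a chain
   into its restriction to X1 and the rest. *)
Lemma Inf_splitU X1 X2 n x : mv_compatible X1 X2 -> Inf (X1 :|: X2) n x ->
  exists x1 x2, [/\ Inf X1 n x1, Inf X2 n x2 & x = x1 + x2].
Proof.
move=> cX [[hx sx] hbx].
have sbx k : n = k.+1 -> supported_in (X1 :|: X2) (bd x).
  by move=> ek; subst n; case: hbx.
set x1 := restrict X1 x; set x2 := restrict (~: X1) x.
have ex : x = x1 + x2 by apply: restrict_splitC.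
have s1 : supported_in X1 x1 by apply: restrict_supp.
have s2 : supported_in X2 x2.
  move=> s; rewrite restrictE inE; case: ifP => [nX1 /sx|]; last by rewrite eqxx.
  by rewrite inE (negbTE nX1).
have disj12 s : x1 s != 0 -> x2 s = 0.
  by rewrite !restrictE inE; case: (s \in X1); rewrite ?eqxx.
have disj21 s : x2 s != 0 -> x1 s = 0.
  by rewrite !restrictE inE; case: (s \in X1); rewrite ?eqxx.
exists x1, x2; split=> //; apply: Inf_intro => //; try exact: restrict_homog.
  by move=> k /sbx; rewrite ex; apply: bd_part_supported.
move=> k /sbx; rewrite ex addrC setUC; apply: bd_part_supported => //.
exact: mv_compatible_sym.
Qed.

End Splitting.

Lemma subr_swap (M : zmodType) (p q r s : M) : p + q = r + s <-> p - r = s - q.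
Proof.
split=> e; first by rewrite -[p](addrK q) e addrAC [r + s]addrC addrK.
by rewrite -[p](subrK r) e addrAC subrK addrC.
Qed.

Lemma hom_sq_additive (M M' : zmodType) (Z B : M -> Prop) (Z' B' : M' -> Prop)
    (f : M -> M') :
  B' 0 -> (forall x y, f (x + y) = f x + f y) ->
  (forall x, Z x -> Z' (f x)) -> (forall x, B x -> B' (f x)) ->
  hom_sq Z B Z' B' f.
Proof. by move=> B'0 fD fZ fB; split=> // x y _ _; rewrite fD addrAC addrK subrr. Qed.

Section MayerVietoris.
Variables (V : finType) (G : zmodType) (B1 A1 B2 A2 : {set {set V}}).
Hypotheses (sA1 : A1 \subset B1) (sA2 : A2 \subset B2).
Hypotheses (cB : mv_compatible B1 B2) (cA : mv_compatible A1 A2).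

Local Notation Zcap n := (@relZ V G (B1 :&: B2) (A1 :&: A2) n).
Local Notation Bcap n := (@relB V G (B1 :&: B2) (A1 :&: A2) n).
Local Notation Zsum n := (sumP (@relZ V G B1 A1 n) (@relZ V G B2 A2 n)).
Local Notation Bsum n := (sumP (@relB V G B1 A1 n) (@relB V G B2 A2 n)).
Local Notation Zcup n := (@relZ V G (B1 :|: B2) (A1 :|: A2) n).
Local Notation Bcup n := (@relB V G (B1 :|: B2) (A1 :|: A2) n).

Lemma Bsum0 n : Bsum n 0.
Proof. by split; apply: relB0. Qed.

Lemma BsumD n p q : Bsum n p -> Bsum n q -> Bsum n (p + q).
Proof. by move=> [p1 p2] [q1 q2]; split; apply: relBD. Qed.

Lemma mv_iD (x y : chain V G) : mv_i (x + y) = mv_i x + mv_i y.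
Proof. by rewrite /mv_i opprD. Qed.

Lemma hom_i n : hom_sq (Zcap n) (Bcap n) (Zsum n) (Bsum n) (@mv_i V G).
Proof.
apply: hom_sq_additive => [|x y|x /relZI[]|x /relBI[]]; first exact: Bsum0.
- exact: mv_iD.
- by move=> h1 h2; split=> //; apply: relZN.
- by move=> h1 h2; split=> //; apply: relBN.
Qed.

Lemma hom_j n : hom_sq (Zsum n) (Bsum n) (Zcup n) (Bcup n) (@mv_j V G).
Proof.
apply: hom_sq_additive => [|[p q] [p' q']|[p q] [hp hq]|[p q] [hp hq]].
- exact: relB0.
- by rewrite /mv_j /= addrACA.
- exact: relZ_addU.
- exact: relB_addU.
Qed.

(* The connecting relation: x represents the image of the class of z when
   z = z1 + z2 with z_i in Inf_{n+1}(B_i), and x = bd z1 - a1 = a2 - bd z2 with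
   a_i in Inf_n(A_i); thus x lies in both Inf_n(B1) and Inf_n(B2). *)
Definition conn_rel n (z x : chain V G) : Prop :=
  exists z1 z2 a1 a2,
  [/\ Inf B1 n.+1 z1, Inf B2 n.+1 z2, Inf A1 n a1, Inf A2 n a2 &
      [/\ z = z1 + z2, x = bd z1 - a1 & x = a2 - bd z2]].

Lemma conn_rel0 n : conn_rel n 0 0.
Proof.
exists 0, 0, 0, 0; rewrite bd0 !subr0 addr0.
by split; rewrite //; apply: Inf0.
Qed.

Lemma conn_relB n z x z' x' :
  conn_rel n z x -> conn_rel n z' x' -> conn_rel n (z - z') (x - x').
Proof.
move=> [z1 [z2 [a1 [a2 [h1 h2 g1 g2 [-> -> e]]]]]].
move=> [z1' [z2' [a1' [a2' [h1' h2' g1' g2' [-> -> e']]]]]].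
exists (z1 - z1'), (z2 - z2'), (a1 - a1'), (a2 - a2').
split; try exact: InfB.
split; first by rewrite opprD addrACA.
  by rewrite bdB !opprD addrACA.
by rewrite e e' bdB !opprD addrACA.
Qed.

Lemma conn_relD n z x z' x' :
  conn_rel n z x -> conn_rel n z' x' -> conn_rel n (z + z') (x + x').
Proof.
move=> h h'; have := conn_relB h (conn_relB (conn_rel0 n) h').
by rewrite !sub0r !opprK.
Qed.

Lemma conn_rel_total n z : Zcup n.+1 z -> exists x, conn_rel n z x.
Proof.
case=> hz hbz; have [z1 [z2 [h1 h2 ez]]] := Inf_splitU cB hz.
have [a1 [a2 [g1 g2 ea]]] := Inf_splitU cA hbz.
exists (bd z1 - a1), z1, z2, a1, a2; split=> //; split=> //.
by apply/(subr_swap _ (bd z2)); rewrite -bdD -ez.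
Qed.

Lemma conn_rel_dom n z x : conn_rel n z x -> Zcup n.+1 z.
Proof.
move=> [z1 [z2 [a1 [a2 [h1 h2 g1 g2 [-> e1 e2]]]]]]; split; first exact: Inf_addU.
have -> : bd (z1 + z2) = a1 + a2.
  by rewrite bdD; apply/(subr_swap _ _ a1); rewrite -e1 -e2.
exact: Inf_addU.
Qed.

Lemma conn_rel_cycle n z x : conn_rel n z x -> Zcap n x.
Proof.
move=> [z1 [z2 [a1 [a2 [h1 h2 g1 g2 [_ e1 e2]]]]]]; apply/relZI; split; apply/relZP.
  split=> [|k ek]; rewrite e1.
    by apply: InfB; [apply: Inf_bd | apply: Inf_mono g1].
  by subst n; rewrite bdB bdbd sub0r; apply/InfN/Inf_bd.
split=> [|k ek]; rewrite e2.
  by apply: InfB; [apply: Inf_mono g2 | apply: Inf_bd].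
by subst n; rewrite bdB bdbd subr0; apply: Inf_bd.
Qed.

(* Boundaries of the union are related only to boundaries of the
   intersection: this makes the connecting map well defined. *)
Lemma conn_rel_bound n z x : conn_rel n z x -> Bcup n.+1 z -> Bcap n x.
Proof.
move=> [z1 [z2 [a1 [a2 [h1 h2 g1 g2 [ez e1 e2]]]]]] [y [b [hy [hb eb]]]].
have [y1 [y2 [k1 k2 ey]]] := Inf_splitU cB hy.
have [b1 [b2 [l1 l2 eb12]]] := Inf_splitU cA hb.
pose w := z1 - (bd y1 + b1).
have ew : w = bd y2 + b2 - z2.
  by apply/(subr_swap _ z2); rewrite -ez eb ey eb12 bdD addrACA.
have w1 : Inf B1 n.+1 w by apply/InfB/InfD/(Inf_mono sA1 l1)/Inf_bd.
have w2 : Inf B2 n.+1 w by rewrite ew; apply/InfB/h2/InfD/(Inf_mono sA2 l2)/Inf_bd.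
exists w, (x - bd w); split; first exact/InfI.
split; last by rewrite addrC subrK.
apply/InfI; split.
  rewrite e1 /w bdB bdD bdbd add0r opprB addrC subrKA.
  by apply: InfB; [apply: Inf_bd | ].
rewrite e2 ew bdB bdD bdbd add0r opprB subrKA.
by apply: InfB; [| apply: Inf_bd].
Qed.

Lemma conn_rel_congr n z z' x x' : conn_rel n z x -> conn_rel n z' x' ->
  Bcup n.+1 (z - z') -> Bcap n (x - x').
Proof. by move=> h h'; apply: conn_rel_bound (conn_relB h h'). Qed.

Lemma conn_rel_sum n z x : conn_rel n z x -> Bsum n (@mv_i V G x).
Proof.
move=> [z1 [z2 [a1 [a2 [h1 h2 g1 g2 [_ e1 e2]]]]]]; split.
  by exists z1, (- a1); split=> //; split; [apply: InfN | ].
exists z2, (- a2); split=> //; split; first exact: InfN.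
by rewrite /= e2 opprB addrC.
Qed.

Definition conn n (z : chain V G) : chain V G := epsilon (inhabits 0) (conn_rel n z).

Lemma connP n z : Zcup n.+1 z -> conn_rel n z (conn n z).
Proof. by move=> hz; apply: epsilon_spec; apply: conn_rel_total. Qed.

Lemma hom_conn n : hom_sq (Zcup n.+1) (Bcup n.+1) (Zcap n) (Bcap n) (conn n).
Proof.
have sAu : A1 :|: A2 \subset B1 :|: B2 by apply: setUSS.
split=> [z /connP /conn_rel_cycle //|z hz|x y hx hy].
  rewrite -[conn n z]subr0.
  by apply: conn_rel_congr (connP (relB_relZ sAu hz)) (conn_rel0 n) _; rewrite subr0.
rewrite -addrA -opprD.
apply: conn_rel_congr (connP (relZD hx hy)) (conn_relD (connP hx) (connP hy)) _.
by rewrite subrr; apply: relB0.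
Qed.

Lemma exact_cap n :
  exact_at (Zcup n.+1) (Bcup n.+1) (Zcap n) (Bcap n) (Zsum n) (Bsum n)
    (conn n) (@mv_i V G).
Proof.
move=> x hx; split=> [[[y1 [a1 [k1 [l1 e1]]]] [y2 [a2 [k2 [l2 e2]]]]]|[w hw hb]].
  move: e1 e2 => /= e1 e2.
  have rel : conn_rel n (y1 + y2) x.
    exists y1, y2, (- a1), (- a2); split; rewrite ?opprK //; try exact: InfN.
    by split=> //; rewrite -[x]opprK e2 opprD addrC.
  exists (y1 + y2); first exact: conn_rel_dom rel.
  apply: conn_rel_congr rel (connP (conn_rel_dom rel)) _.
  by rewrite subrr; apply: relB0.
have -> : @mv_i V G x = @mv_i V G (x - conn n w) + @mv_i V G (conn n w).
  by rewrite -mv_iD subrK.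
apply: BsumD; last exact: conn_rel_sum (connP hw).
by case: (relBI hb) => hb1 hb2; split=> //; apply: relBN.
Qed.

Lemma exact_sum n :
  exact_at (Zcap n) (Bcap n) (Zsum n) (Bsum n) (Zcup n) (Bcup n)
    (@mv_i V G) (@mv_j V G).
Proof.
move=> [p q] [hp hq]; split=> [[y [a [hy [ha e]]]]|[w hw [hb1 hb2]]]; last first.
  have -> : mv_j (p, q) = (p - w) + (q - - w).
    by rewrite /mv_j /= opprK addrACA addNr addr0.
  by move: hb1 hb2 => /= hb1 hb2; apply: relB_addU.
rewrite /mv_j /= in e.
have [y1 [y2 [k1 k2 ey]]] := Inf_splitU cB hy.
have [a1 [a2 [l1 l2 ea]]] := Inf_splitU cA ha.
have ew : p - (bd y1 + a1) = bd y2 + a2 - q.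
  by apply/(subr_swap _ q); rewrite e ey ea bdD addrACA.
have b1 : relB B1 A1 n (bd y1 + a1) by exists y1, a1.
have b2 : relB B2 A2 n (bd y2 + a2) by exists y2, a2.
exists (p - (bd y1 + a1)).
  apply/relZI; split; first by apply: relZB => //; apply: relB_relZ b1.
  by rewrite ew; apply: relZB => //; apply: relB_relZ b2.
by split; rewrite /= ?subKr // ew opprK subrKC.
Qed.

Lemma exact_cup n : exact_at (Zsum n.+1) (Bsum n.+1) (Zcup n.+1) (Bcup n.+1)
  (Zcap n) (Bcap n) (@mv_j V G) (conn n).
Proof.
move=> z hz; split=> [[y [a [/InfI[y1 y2] [/InfI[ha1 ha2] hb]]]]|[[p q] [hp hq] hb]].
  have [z1 [z2 [a1 [a2 [h1 h2 g1 g2 [ez e1 e2]]]]]] := connP hz.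
  exists (z1 - y, z2 + y).
    split; split; rewrite /=; try by [apply: InfB | apply: InfD].
      by rewrite bdB -[bd z1](subrK a1) -e1 hb -addrA addrC subrKA; apply: InfD.
    rewrite bdD -[bd z2](subKr a2) -e2 hb [bd y + a]addrC opprD addrA subrK.
    by apply: InfB.
  by rewrite /mv_j /= addrACA addNr addr0 -ez subrr; apply: relB0.
have rel : conn_rel n (p + q) 0.
  by exists p, q, (bd p), (bd q); case: hp; case: hq; rewrite !subrr.
by rewrite -[conn n z]subr0; apply: conn_rel_congr (connP hz) rel hb.
Qed.

Lemma surj_H0 z : Zcup 0 z -> exists2 w, Zsum 0 w & Bcup 0 (z - @mv_j V G w).
Proof.
case=> hz _; have [z1 [z2 [h1 h2 ez]]] := Inf_splitU cB hz.
exists (z1, z2); first by split; split.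
by rewrite /mv_j /= -ez subrr; apply: relB0.
Qed.

Theorem MV_les_general : MV_les G B1 A1 B2 A2.
Proof.
exists conn; split=> [n|]; last exact: surj_H0.
split; split; [exact: hom_i | exact: hom_j | exact: hom_conn |
               exact: exact_cap | exact: exact_sum | exact: exact_cup].
Qed.

End MayerVietoris.

Unset Implicit Arguments.
Close Scope ring_scope.

Theorem mainTheorem8 (V : finType) (G : zmodType) (H H' : {set {set V}}) :
  hypergraph H -> hypergraph H' ->
  (forall s s', s \in H -> s' \in H' ->
     s :&: s' = set0 \/ s :&: s' \in H :&: H') ->
  MV_les G H (delta H) H' (delta H') /\
  MV_les G (Delta H) H (Delta H') H'.
Proof.
move=> hH hH' hyp; have cHH' := hyp_compatible hyp.
split; apply: MV_les_general.
- exact: delta_sub.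
- exact: delta_sub.
- exact: cHH'.
- by apply: down_closed_compatible; apply: delta_down_closed.
- exact: Delta_sup.
- exact: Delta_sup.
- by apply: down_closed_compatible; apply: Delta_down_closed.
- exact: cHH'.
Qed.
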